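(* Consider the perturbed federated algorithm described in the context, with $\beta\in(0,1)$. Assume that the bounded variance, bounded stochastic gradient norm and $L$-smoothness assumptions hold. Then for every client $i$, round $t\ge0$ and step $k\in\{0,\dots,E-1\}$, $$\mathbb{E}\|\overline{\mathbf{w}}_{t,k}-\widetilde{\mathbf{w}}^i_{t,k}\|^2\le4\gamma_t^2E^2G^2\Big[4+(1-\beta)^2+\mathbb{1}_{t\ge1}\frac{8\gamma_{t-1}^2}{\gamma_t^2}\Big(1-\frac1\beta\Big)^2\Big].$$
   Context: Setting: there are $C$ clients with local objectives $F_i:\mathbb{R}^D\to\mathbb{R}$. Similarity weights $p_{in}\ge0$ are symmetric, satisfy $p_{ii}=0$, and $\sum_{i,n}p_{in}=1$. Let $p_i=\sum_np_{in}>0$. Algorithm, with parameter $\beta$, $E\ge1$ local steps and step sizes $\gamma_t$, all clients participating: - $\mathbf{u}^i_0=\overline{\mathbf{w}}_{0,0}$. - In round $t$, $\mathbf{w}^i_{t,0}=\overline{\mathbf{w}}_{t,0}$. For $k=0,\dots,E-1$, $\widetilde{\mathbf{w}}^i_{t,k}=\beta\mathbf{w}^i_{t,k}+(1-\beta)\mathbf{u}^i_t$ and $\mathbf{w}^i_{t,k+1}=\mathbf{w}^i_{t,k}-\gamma_tg_i(\widetilde{\mathbf{w}}^i_{t,k})$, with stochastic gradients $g_i$ of $F_i$ sampled independently given the past. - $\overline{\mathbf{w}}_{t,k}=\sum_ip_i\mathbf{w}^i_{t,k}$ and $\overline{\mathbf{w}}_{t+1,0}=\overline{\mathbf{w}}_{t,E}$.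 - For $t\ge1$, $\mathbf{u}^i_t=\frac1{p_i}\sum_np_{in}\mathbf{w}^n_{t-1,E}$. Assumptions: - Unbiasedness: $\mathbb{E}\,g_i(\widetilde{\mathbf{w}}^i_{t,k})=\nabla F_i(\widetilde{\mathbf{w}}^i_{t,k})$. - Variance: $\mathbb{E}\|g_i(\widetilde{\mathbf{w}}^i_{t,k})-\nabla F_i(\widetilde{\mathbf{w}}^i_{t,k})\|^2\le\sigma^2$. - Bounded second moment: $\mathbb{E}\|g_i(\widetilde{\mathbf{w}}^i_{t,k})\|^2\le G^2$. - Each $\nabla F_i$ is $L$-Lipschitz. $\mathbb{E}$ is total expectation. *)

From HB Require Import structures.
From mathcomp Require Import all_boot all_order all_algebra.
From mathcomp Require Import all_classical all_reals all_analysis.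
Set Implicit Arguments. Unset Strict Implicit. Unset Printing Implicit Defensive.
Import Order.TTheory GRing.Theory Num.Theory.
Import numFieldNormedType.Exports.
Local Open Scope ring_scope.

Section Alg.
Variables (R : realType) (D C : nat).
Local Notation vec := 'rV[R]_D.

Definition dotv (x y : vec) : R := \sum_(j < D) x ord0 j * y ord0 j.
Definition norm2 (x : vec) : R := dotv x x.
Definition enorm (x : vec) : R := Num.sqrt (norm2 x).

(* parameters of the algorithm:
   p : pairwise similarity weights p_{in};
   beta, E (local steps), gamma (step sizes), w0 = \bar w_{0,0};
   gr i t k w : the stochastic gradient returned to client i at round t,
   local step k, when queried at point w (for a fixed sample point). *)
Variables (p : 'I_C -> 'I_C -> R) (beta : R) (E : nat) (gamma : nat -> R)
  (w0 : vec) (gr : 'I_C -> nat -> nat -> vec -> vec).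

Definition pw (i : 'I_C) : R := \sum_(n < C) p i n.

(* \bar w_{t,0} given the final local iterates of round t-1 (None if t = 0) *)
Definition start_of (prev : option ('I_C -> vec)) : vec :=
  match prev with
  | None => w0
  | Some f => \sum_(i < C) pw i *: f i
  end.

(* u^i_t given the final local iterates of round t-1 (None if t = 0) *)
Definition u_of (prev : option ('I_C -> vec)) (i : 'I_C) : vec :=
  match prev with
  | None => w0
  | Some f => (pw i)^-1 *: \sum_(n < C) p i n *: f n
  end.

(* local iterate w^i_{t,k}, from start point s = \bar w_{t,0} and u = u^i_t *)
Fixpoint local (t : nat) (s u : vec) (i : 'I_C) (k : nat) : vec :=
  match k with
  | 0 => s
  | k'.+1 =>
      let w := local t s u i k' in
      w - gamma t *: gr i t k' (beta *: w + (1 - beta) *: u)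
  end.

Fixpoint final (t : nat) : 'I_C -> vec :=
  let prev := match t with 0 => None | t'.+1 => Some (final t') end in
  fun i => local t (start_of prev) (u_of prev i) i E.

Definition prev_round (t : nat) : option ('I_C -> vec) :=
  match t with 0 => None | t'.+1 => Some (final t') end.

Definition u_it (t : nat) (i : 'I_C) : vec := u_of (prev_round t) i.
Definition w_loc (t k : nat) (i : 'I_C) : vec :=
  local t (start_of (prev_round t)) (u_it t i) i k.
Definition w_bar (t k : nat) : vec := \sum_(i < C) pw i *: w_loc t k i.
Definition w_til (t k : nat) (i : 'I_C) : vec :=
  beta *: w_loc t k i + (1 - beta) *: u_it t i.

End Alg.

From HB Require Import structures.
From mathcomp Require Import all_boot all_order all_algebra.
From mathcomp Require Import all_classical all_reals all_analysis.
From mathcomp Require Import measurable_realfun ring lra.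

(* Unrolling the local updates, each local iterate of round t is the starting point
   w̄_{t,0} minus γ_t times the stochastic gradients accumulated so far, and by the
   recursions of the algorithm w̄_{t+1,0} and u^i_{t+1} are expressions of the same kind
   built from round t.  Hence w̄_{t,k} - w̃^i_{t,k} is an explicit linear combination of
   accumulated gradients in which the starting points cancel, and the weighted
   Cauchy-Schwarz inequality ‖Σ c_a x_a‖² ≤ (Σ |c_a|) Σ |c_a| ‖x_a‖² together with the
   second-moment bound G² yields the estimate. *)

Set Implicit Arguments.
Unset Strict Implicit.
Unset Printing Implicit Defensive.
Import Order.TTheory GRing.Theory Num.Theory.
Import numFieldNormedType.Exports.
Local Open Scope ring_scope.

Lemma sqr_sum_le (R : realDomainType) (I : finType) (c y : I -> R) :
  (\sum_a c a * y a) ^+ 2 <= (\sum_a `|c a|) * \sum_a `|c a| * y a ^+ 2.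
Proof.
set S := (\sum_a `|c a|) * _.
have -> : (\sum_a c a * y a) ^+ 2 = \sum_a \sum_b c a * y a * (c b * y b).
  by rewrite expr2 big_distrl; apply: eq_bigr => a _; rewrite big_distrr.
have S_r : S = \sum_a \sum_b `|c a| * (`|c b| * y b ^+ 2).
  by rewrite /S big_distrl; apply: eq_bigr => a _; rewrite big_distrr.
have S_l : S = \sum_a \sum_b `|c b| * (`|c a| * y a ^+ 2) by rewrite S_r exchange_big.
(* [S] is symmetric in [a] and [b]; conclude termwise with [2 |y a| |y b| <= y a ^+ 2 + y b ^+ 2]. *)
suff : 2 * \sum_a \sum_b c a * y a * (c b * y b) <= S + S by lra.
rewrite {1}S_r S_l -big_split /= mulr_sumr; apply: ler_sum => a _.
rewrite -big_split /= mulr_sumr; apply: ler_sum => b _.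
have ab_le : c a * y a * (c b * y b) <= `|c a| * `|y a| * (`|c b| * `|y b|).
  by rewrite -!normrM; apply: ler_norm.
have ca_ge0 := normr_ge0 (c a); have cb_ge0 := normr_ge0 (c b).
have sqr_diff_ge0 : 0 <= `|c a| * `|c b| * (`|y a| - `|y b|) ^+ 2.
  by rewrite mulr_ge0 ?sqr_ge0.
rewrite -(real_normK (num_real (y a))) -(real_normK (num_real (y b))).
nra.
Qed.

Lemma norm2_ge0 (R : realType) (D : nat) (x : 'rV[R]_D) : 0 <= norm2 x.
Proof. by apply: sumr_ge0 => j _; rewrite -expr2 sqr_ge0. Qed.

Lemma norm2_sum_le (R : realType) (D : nat) (I : finType) (c : I -> R)
    (x : I -> 'rV[R]_D) :
  norm2 (\sum_a c a *: x a) <= (\sum_a `|c a|) * \sum_a `|c a| * norm2 (x a).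
Proof.
have -> : \sum_a `|c a| * norm2 (x a) = \sum_(j < D) \sum_a `|c a| * x a ord0 j ^+ 2.
  rewrite exchange_big /=; apply: eq_bigr => a _; rewrite mulr_sumr.
  by apply: eq_bigr => j _; rewrite expr2.
rewrite mulr_sumr; apply: ler_sum => j _.
rewrite -expr2 summxE (eq_bigr (fun a => c a * x a ord0 j)) => [|a _]; last by rewrite mxE.
exact: sqr_sum_le.
Qed.

Lemma integral_wsum_EFin (R : realType) (d : measure_display) (T : measurableType d)
    (mu : {measure set T -> \bar R}) (I : finType) (k : I -> R) (g : I -> T -> R) :
  (forall a, 0 <= k a) -> (forall a x, 0 <= g a x) ->
  (forall a, measurable_fun setT (g a)) ->
  (\int[mu]_x (\sum_a k a * g a x)%:E = \sum_a (k a)%:E * \int[mu]_x (g a x)%:E)%E.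
Proof.
move=> k_ge0 g_ge0 mg; under eq_integral do rewrite -sumEFin.
rewrite ge0_integral_sum //; last 2 first.
- by move=> a; apply/measurable_EFinP; exact: measurable_funM (measurable_cst _) (mg a).
- by move=> a x _; rewrite lee_fin mulr_ge0.
apply: eq_bigr => a _; under eq_integral do rewrite EFinM.
by rewrite ge0_integralZl_EFin // => [x _|]; [rewrite lee_fin | exact/measurable_EFinP].
Qed.

Section SecondMoment.
Variables (R : realType) (D : nat) (d : measure_display) (Omega : measurableType d)
  (P : probability Omega R).
Implicit Types (f g : Omega -> 'rV[R]_D) (M : R).

Definition coord_measurable f := forall j, measurable_fun setT (fun w => f w ord0 j).

Definition moment2_le f M :=
  coord_measurable f /\ (\int[P]_w (norm2 (f w))%:E <= M%:E)%E.

Lemma measurable_norm2 f : coord_measurable f -> measurable_fun setT (fun w => norm2 (f w)).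
Proof. by move=> mf; apply: measurable_sum => j; apply: measurable_funM. Qed.

Lemma coord_measurable_sum (I : finType) (c : I -> R) (f : I -> Omega -> 'rV[R]_D) :
  (forall a, coord_measurable (f a)) -> coord_measurable (fun w => \sum_a c a *: f a w).
Proof.
move=> mf j; rewrite (_ : (fun w => _) = fun w => \sum_a c a * f a w ord0 j).
  by apply: measurable_sum => a; exact: measurable_funM (measurable_cst _) (mf a j).
by apply/funext => w; rewrite summxE; apply: eq_bigr => a _; rewrite mxE.
Qed.

Lemma moment2_le_trans f M M' : moment2_le f M -> M <= M' -> moment2_le f M'.
Proof. by move=> [mf hf] hM; split => //; apply: le_trans hf _; rewrite lee_fin. Qed.

Lemma moment2_sum (I : finType) (c : I -> R) (f : I -> Omega -> 'rV[R]_D) (M : I -> R) :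
  (forall a, moment2_le (f a) (M a)) ->
  moment2_le (fun w => \sum_a c a *: f a w) ((\sum_a `|c a|) * \sum_a `|c a| * M a).
Proof.
move=> hf; have mf a := (hf a).1.
split; first exact: coord_measurable_sum.
pose k a := (\sum_b `|c b|) * `|c a|.
have k_ge0 a : 0 <= k a by rewrite mulr_ge0 ?sumr_ge0.
have kE (m : I -> R) : (\sum_b `|c b|) * \sum_a `|c a| * m a = \sum_a k a * m a.
  by rewrite mulr_sumr; apply: eq_bigr => a _; rewrite mulrA.
apply: (@le_trans _ _ (\int[P]_w (\sum_a k a * norm2 (f a w))%:E)%E).
  apply: ge0_le_integral => //.
  - by move=> w _; rewrite lee_fin norm2_ge0.
  - exact/measurable_EFinP/measurable_norm2/coord_measurable_sum.
  - apply/measurable_EFinP; apply: measurable_sum => a.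
    exact: measurable_funM (measurable_cst _) (measurable_norm2 (mf a)).
  - by move=> w _; rewrite lee_fin -kE norm2_sum_le.
rewrite integral_wsum_EFin // => [|a w|a]; last 2 first.
- exact: norm2_ge0.
- exact: measurable_norm2.
rewrite kE -sumEFin; apply: lee_sum => a _.
by rewrite (EFinM (k a)); apply: lee_wpmul2l; [rewrite lee_fin | exact: (hf a).2].
Qed.

Lemma moment2_convex (I : finType) (c : I -> R) (f : I -> Omega -> 'rV[R]_D) M :
  (forall a, 0 <= c a) -> \sum_a c a = 1 -> (forall a, moment2_le (f a) M) ->
  moment2_le (fun w => \sum_a c a *: f a w) M.
Proof.
move=> c_ge0 c_sum1 hf.
suff <- : (\sum_a `|c a|) * \sum_a `|c a| * M = M by exact: moment2_sum.
rewrite -mulr_suml; under eq_bigr do rewrite ger0_norm //.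
by rewrite c_sum1 !mul1r.
Qed.

Lemma moment2_sum_card (I : finType) (f : I -> Omega -> 'rV[R]_D) M :
  (forall a, moment2_le (f a) M) -> moment2_le (fun w => \sum_a f a w) (#|I|%:R ^+ 2 * M).
Proof.
move=> /(moment2_sum (fun=> 1)).
rewrite (_ : (fun w => _) = fun w => \sum_a f a w).
  by rewrite normr1 !sumr_const mul1r -[M *+ _]mulr_natl mulrA -expr2.
by apply/funext => w; under eq_bigr do rewrite scale1r.
Qed.

Lemma moment2_pair f g (a b M1 M2 : R) : moment2_le f M1 -> moment2_le g M2 ->
  moment2_le (fun w => a *: f w + b *: g w) ((`|a| + `|b|) * (`|a| * M1 + `|b| * M2)).
Proof.
move=> hf hg.
have hfg (x : bool) : moment2_le (if x then f else g) (if x then M1 else M2) by case: x.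
have := moment2_sum (fun x => if x then a else b) hfg.
rewrite !big_bool (_ : (fun w => _) = fun w => a *: f w + b *: g w) //.
by apply/funext => w; rewrite big_bool.
Qed.

Lemma moment2_add f g M1 M2 : moment2_le f M1 -> moment2_le g M2 ->
  moment2_le (fun w => f w + g w) (2 * (M1 + M2)).
Proof.
move=> hf hg; have := moment2_pair 1 1 hf hg.
rewrite normr1 !mul1r (_ : (fun w => _) = fun w => f w + g w) //.
by apply/funext => w; rewrite !scale1r.
Qed.

Lemma moment2_lin2 f g (a b M : R) : moment2_le f M -> moment2_le g M ->
  moment2_le (fun w => a *: f w + b *: g w) ((`|a| + `|b|) ^+ 2 * M).
Proof. by move=> hf hg; rewrite expr2 -mulrA [(_ + _) * M]mulrDl; exact: moment2_pair. Qed.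

End SecondMoment.

Section Unrolling.
Variables (R : realType) (D C : nat) (p : 'I_C -> 'I_C -> R).
Hypothesis pw_sum1 : \sum_i pw p i = 1.
Variables (beta : R) (E : nat) (gamma : nat -> R) (w0 : 'rV[R]_D)
  (gr : 'I_C -> nat -> nat -> 'rV[R]_D -> 'rV[R]_D).

Local Notation w_start t := (start_of p w0 (prev_round p beta E gamma w0 gr t)).
Local Notation w_loc := (w_loc p beta E gamma w0 gr).
Local Notation w_bar := (w_bar p beta E gamma w0 gr).
Local Notation w_til := (w_til p beta E gamma w0 gr).
Local Notation u_it := (u_it p beta E gamma w0 gr).

Definition grad_acc (t k : nat) (i : 'I_C) : 'rV[R]_D :=
  \sum_(k' < k) gr i t k' (w_til t k' i).

Definition grad_avg (t k : nat) : 'rV[R]_D := \sum_j pw p j *: grad_acc t k j.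

Definition grad_nbr (t : nat) (i : 'I_C) : 'rV[R]_D :=
  \sum_n ((pw p i)^-1 * p i n) *: grad_acc t E n.

Lemma w_locE t k i : w_loc t k i = w_start t - gamma t *: grad_acc t k i.
Proof.
elim: k => [|k IH]; first by rewrite /grad_acc big_ord0 scaler0 subr0.
by rewrite /grad_acc big_ord_recr /= scalerDr opprD addrA -IH.
Qed.

Lemma finalE t i : final p beta E gamma w0 gr t i = w_loc t E i.
Proof. by case: t. Qed.

Lemma w_start_succE t : w_start t.+1 = w_bar t E.
Proof. by case: t. Qed.

Lemma w_barE t k : w_bar t k = w_start t - gamma t *: grad_avg t k.
Proof.
rewrite /w_bar /grad_avg scaler_sumr -[w_start t]scale1r -pw_sum1 scaler_suml -sumrB.
by apply: eq_bigr => j _; rewrite w_locE scalerBr !scalerA mulrC.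
Qed.

Lemma u_it_succE t i : pw p i != 0 -> u_it t.+1 i = w_start t - gamma t *: grad_nbr t i.
Proof.
move=> pwi_neq0; rewrite /u_it /=.
under eq_bigr do rewrite finalE w_locE scalerBr.
rewrite sumrB scalerBr -scaler_suml scalerA mulVf // scale1r; congr (_ - _).
rewrite /grad_nbr !scaler_sumr; apply: eq_bigr => n _.
by rewrite !scalerA; congr (_ *: _); ring.
Qed.

Lemma w_bar_sub_w_til0 k i :
  w_bar 0 k - w_til 0 k i = (beta * gamma 0) *: grad_acc 0 k i + (- gamma 0) *: grad_avg 0 k.
Proof.
rewrite w_barE /w_til w_locE (_ : u_it 0 i = w_start 0) //.
move: (w_start 0) (grad_acc 0 k i) (grad_avg 0 k) => s A X.
by apply/rowP => j; rewrite !mxE; ring.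
Qed.

Lemma w_bar_sub_w_til_succ t k i : pw p i != 0 ->
  w_bar t.+1 k - w_til t.+1 k i =
    ((beta * gamma t.+1) *: grad_acc t.+1 k i + (- gamma t.+1) *: grad_avg t.+1 k)
  + (((1 - beta) * gamma t) *: grad_nbr t i + (- ((1 - beta) * gamma t)) *: grad_avg t E).
Proof.
move=> pwi_neq0; rewrite w_barE /w_til w_locE u_it_succE // w_start_succE w_barE.
move: (w_start t) (grad_acc t.+1 k i) (grad_avg t.+1 k) (grad_nbr t i) (grad_avg t E).
by move=> s A X Z Y; apply/rowP => j; rewrite !mxE; ring.
Qed.

End Unrolling.

Section RoundBounds.
Variable R : realFieldType.
Implicit Types b g h M : R.

Lemma norm_lin2_sqr_le b g : 0 <= b <= 1 -> (`|b * g| + `|- g|) ^+ 2 <= 4 * g ^+ 2.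
Proof.
move=> /andP[b_ge0 b_le1].
rewrite normrN normrM (ger0_norm b_ge0) -(real_normK (num_real g)).
have -> : b * `|g| + `|g| = (b + 1) * `|g| by ring.
rewrite exprMn ler_wpM2r ?sqr_ge0 //; nra.
Qed.

Lemma norm_sub_sqr g : (`|g| + `|- g|) ^+ 2 = 4 * g ^+ 2.
Proof. by rewrite normrN -(real_normK (num_real g)); ring. Qed.

Lemma sqr_subr_le_sqr_subrV b : 0 < b <= 1 -> (1 - b) ^+ 2 <= (1 - b^-1) ^+ 2.
Proof.
move=> /andP[b_gt0 b_le1].
have -> : (1 - b^-1) ^+ 2 = (1 - b) ^+ 2 * b^-1 ^+ 2 by field; rewrite gt_eqF.
by rewrite ler_peMr ?sqr_ge0 // exprn_ege1 // invf_ge1.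
Qed.

Lemma round0_bound b g M : 0 < b < 1 -> 0 <= M ->
  (`|b * g| + `|- g|) ^+ 2 * M <= 4 * g ^+ 2 * M * (4 + (1 - b) ^+ 2).
Proof.
move=> /andP[b_gt0 b_lt1] M_ge0.
have h0 : (`|b * g| + `|- g|) ^+ 2 <= 4 * g ^+ 2.
  by apply: norm_lin2_sqr_le; rewrite (ltW b_gt0) (ltW b_lt1).
apply: le_trans (ler_wpM2r M_ge0 h0) _.
have gM_ge0 : 0 <= 4 * g ^+ 2 * M by rewrite mulr_ge0 // mulr_ge0 // sqr_ge0.
rewrite ler_peMr //; have := sqr_ge0 (1 - b); lra.
Qed.

Lemma round_succ_bound b g h M : 0 < b < 1 -> g != 0 -> 0 <= M ->
  2 * ((`|b * g| + `|- g|) ^+ 2 * M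
       + (`|(1 - b) * h| + `|- ((1 - b) * h)|) ^+ 2 * M)
  <= 4 * g ^+ 2 * M * (4 + (1 - b) ^+ 2 + 8 * h ^+ 2 / g ^+ 2 * (1 - b^-1) ^+ 2).
Proof.
move=> /andP[b_gt0 b_lt1] g_neq0 M_ge0.
have h0 : (`|b * g| + `|- g|) ^+ 2 <= 4 * g ^+ 2.
  by apply: norm_lin2_sqr_le; rewrite (ltW b_gt0) (ltW b_lt1).
have hV : (1 - b) ^+ 2 <= (1 - b^-1) ^+ 2.
  by apply: sqr_subr_le_sqr_subrV; rewrite b_gt0 ltW.
rewrite norm_sub_sqr.
have -> : 4 * g ^+ 2 * M * (4 + (1 - b) ^+ 2 + 8 * h ^+ 2 / g ^+ 2 * (1 - b^-1) ^+ 2)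
    = 4 * g ^+ 2 * M * (4 + (1 - b) ^+ 2) + 32 * h ^+ 2 * M * (1 - b^-1) ^+ 2.
  by field; rewrite g_neq0 gt_eqF.
have gM_ge0 : 0 <= g ^+ 2 * M by rewrite mulr_ge0 ?sqr_ge0.
have hM_ge0 : 0 <= h ^+ 2 * M by rewrite mulr_ge0 ?sqr_ge0.
have := ler_wpM2r M_ge0 h0; have := ler_wpM2r hM_ge0 hV.
have := mulr_ge0 gM_ge0 (sqr_ge0 (1 - b)); have := mulr_ge0 hM_ge0 (sqr_ge0 (1 - b^-1)).
rewrite exprMn; lra.
Qed.

End RoundBounds.

Theorem lemma7
  (R : realType) (D C : nat)
  (* probability space carrying the sampling randomness *)
  (d : measure_display) (Omega : measurableType d) (P : probability Omega R)
  (* local objectives and their gradients *)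
  (F : 'I_C -> 'rV[R]_D -> R) (gradF : 'I_C -> 'rV[R]_D -> 'rV[R]_D)
  (* similarity weights *)
  (p : 'I_C -> 'I_C -> R)
  (* algorithm parameters *)
  (beta : R) (E : nat) (gamma : nat -> R) (w0 : 'rV[R]_D)
  (* stochastic gradient oracle: sg i t k w omega is the stochastic gradient
     of F_i returned at round t, local step k, when queried at w *)
  (sg : 'I_C -> nat -> nat -> 'rV[R]_D -> Omega -> 'rV[R]_D)
  (sigma G L : R)
  (* weights *)
  (hp_ge0 : forall i n, 0 <= p i n)
  (hp_sym : forall i n, p i n = p n i)
  (hp_diag : forall i, p i i = 0)
  (hp_sum : \sum_(i < C) \sum_(n < C) p i n = 1)
  (hpi_gt0 : forall i, 0 < pw p i)
  (* parameters *)
  (hbeta : 0 < beta < 1)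
  (hE : (1 <= E)%N)
  (hgamma : forall t, 0 < gamma t)
  (* gradients and L-smoothness *)
  (hgrad : forall i x, differentiable (F i) x /\
                       forall v, 'd (F i) x v = dotv (gradF i x) v)
  (hL : forall i x y, enorm (gradF i x - gradF i y) <= L * enorm (x - y))
  (* measurability of the realized stochastic gradients *)
  (hmeas : forall t k i j,
      measurable_fun setT (fun omega : Omega =>
        sg i t k (w_til p beta E gamma w0 (fun i' t' k' w => sg i' t' k' w omega) t k i)
           omega ord0 j))
  (* unbiasedness *)
  (hunb : forall t k i j,
      (\int[P]_omega
        (sg i t k (w_til p beta E gamma w0 (fun i' t' k' w => sg i' t' k' w omega) t k i)
           omega ord0 j)%:E
       = \int[P]_omega
        (gradF i (w_til p beta E gamma w0 (fun i' t' k' w => sg i' t' k' w omega) t k i)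
           ord0 j)%:E)%E)
  (* bounded variance *)
  (hvar : forall t k i,
      (\int[P]_omega
        (norm2 (sg i t k (w_til p beta E gamma w0 (fun i' t' k' w => sg i' t' k' w omega) t k i) omega
                - gradF i (w_til p beta E gamma w0 (fun i' t' k' w => sg i' t' k' w omega) t k i)))%:E
       <= (sigma ^+ 2)%:E)%E)
  (* bounded second moment *)
  (hG : forall t k i,
      (\int[P]_omega
        (norm2 (sg i t k (w_til p beta E gamma w0 (fun i' t' k' w => sg i' t' k' w omega) t k i) omega))%:E
       <= (G ^+ 2)%:E)%E) :
  forall (i : 'I_C) (t k : nat), (k < E)%N ->
    (\int[P]_omega
      (norm2 (w_bar p beta E gamma w0 (fun i' t' k' w => sg i' t' k' w omega) t k
              - w_til p beta E gamma w0 (fun i' t' k' w => sg i' t' k' w omega) t k i))%:E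
     <= (4 * gamma t ^+ 2 * (E%:R) ^+ 2 * G ^+ 2 *
          (4 + (1 - beta) ^+ 2 +
           (if (1 <= t)%N
            then 8 * gamma t.-1 ^+ 2 / gamma t ^+ 2 * (1 - beta^-1) ^+ 2
            else 0)))%:E)%E.
Proof.
move=> i t k k_lt_E.
pose oracle (w : Omega) i' t' k' x := sg i' t' k' x w.
pose M := E%:R ^+ 2 * G ^+ 2.
have M_ge0 : 0 <= M by rewrite mulr_ge0 ?sqr_ge0.
have acc_moment t' k' j : (k' <= E)%N ->
    moment2_le P (fun w => grad_acc p beta E gamma w0 (oracle w) t' k' j) M.
  move=> k'_le_E; apply: moment2_le_trans (moment2_sum_card _) _.
    by move=> k''; split; [exact: hmeas | exact: hG].
  by rewrite card_ord /M ler_wpM2r ?sqr_ge0 // lerXn2r ?nnegrE // ler_nat.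
have avg_moment t' k' : (k' <= E)%N ->
    moment2_le P (fun w => grad_avg p beta E gamma w0 (oracle w) t' k') M.
  by move=> k'_le_E; apply: moment2_convex => // j; [exact: ltW | exact: acc_moment].
have nbr_moment t' : moment2_le P (fun w => grad_nbr p beta E gamma w0 (oracle w) t' i) M.
  apply: moment2_convex => [n | | n]; last exact: acc_moment.
  - by rewrite mulr_ge0 // invr_ge0 (ltW (hpi_gt0 i)).
  - by rewrite -big_distrr /= mulVf ?gt_eqF.
have k_le_E := ltnW k_lt_E.
case: t => [|t].
- under eq_integral do rewrite (w_bar_sub_w_til0 hp_sum).
  apply: le_trans (moment2_lin2 _ _ (acc_moment 0 k i k_le_E) (avg_moment 0 k k_le_E)).2 _.
  by rewrite lee_fin /= addr0 -[4 * _ * _ * _]mulrA round0_bound.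
- under eq_integral do rewrite (w_bar_sub_w_til_succ hp_sum) ?gt_eqF //.
  apply: le_trans (moment2_add
    (moment2_lin2 _ _ (acc_moment t.+1 k i k_le_E) (avg_moment t.+1 k k_le_E))
    (moment2_lin2 _ _ (nbr_moment t) (avg_moment t E (leqnn E)))).2 _.
  by rewrite lee_fin /= -[4 * _ * _ * _]mulrA round_succ_bound ?gt_eqF.
Qed.
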